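(* Let $d\ge2$, $k\ge1$, $U=U_1\times\cdots\times U_d$ with pairwise disjoint $U_i$, and $T\subseteq U$. Let $\mathbb F$ be a field of characteristic $2$ with $|\mathbb F|\ge N$. Let $f:\bigcup_{i=2}^dU_i\to\mathbb F$ be injective, and let $\chi(b)=(1,f(b),\dots,f(b)^{(d-1)k-1})\in\mathbb F^{(d-1)k}$. For $t\in T$ let $M_t=\chi(t[2])\wedge\cdots\wedge\chi(t[d])\in\Lambda(\mathbb F^{(d-1)k})$. Let $y_t$ ($t\in T$) and $z$ be indeterminates. For $a\in U_1$ let $Q_a=\sum_{t\in T:t[1]=a}M_ty_t$, and set $$P(z)=\prod_{a\in U_1}(1+zQ_a).$$ Then $P$ has $z$-degree at most $k$. Moreover, the coefficient of $z^ke_{[(d-1)k]}$ in $P(z)$ is a nonzero polynomial in the variables $\{y_t\}$ if and only if $T$ contains $k$ pairwise disjoint tuples.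
   Context: $\Lambda(\mathbb F^{r})$ is the exterior algebra over $\mathbb F^r$ with basis $\{e_I:I\subseteq[r]\}$ and $e_{[r]}=e_1\wedge\cdots\wedge e_r$. Vectors are identified with degree-one elements. Since $\mathbb F$ has characteristic $2$, this algebra is commutative. Coefficients are taken in the polynomial ring $\mathbb F[\{y_t\}]$. Tuples $a,b\in U$ are disjoint if $a[i]\ne b[i]$ for all $i=1,\dots,d$. *)

From HB Require Import structures.
From mathcomp Require Import all_boot all_order all_algebra.
From mathcomp Require Import mpoly.
Set Implicit Arguments. Unset Strict Implicit. Unset Printing Implicit Defensive.
Import GRing.Theory.
Local Open Scope ring_scope.

(* Exterior algebra Lambda(R^r) over a commutative ring R, with basis e_I,
   I a subset of {0,..,r-1}; an element is its coordinate function. *)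
Section Exterior.
Variables (R : comRingType) (r : nat).

Definition ext := {ffun {set 'I_r} -> R}.

(* e_I /\ e_J = ext_sign I J * e_(I u J) if I, J disjoint, 0 otherwise *)
Definition ext_sign (I J : {set 'I_r}) : R :=
  (-1) ^+ #|[set p : 'I_r * 'I_r | (p.1 \in I) && (p.2 \in J) && (p.2 < p.1)%N]|.

Definition ext_mul (u v : ext) : ext :=
  [ffun K => \sum_(I : {set 'I_r}) \sum_(J : {set 'I_r} | [disjoint I & J] && (I :|: J == K))
      ext_sign I J * u I * v J].

Definition ext_one : ext := [ffun K => (K == set0)%:R].
Definition ext_add (u v : ext) : ext := [ffun K => u K + v K].
Definition ext_scale (c : R) (u : ext) : ext := [ffun K => c * u K].
Definition ext_vec (v : 'I_r -> R) : ext :=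
  [ffun K => \sum_(i : 'I_r | K == [set i]) v i].
(* the top basis element e_[r] corresponds to the coordinate at setT *)
End Exterior.

Section Construction.
Variables (d k : nat) (X : finType) (U : 'I_d -> {set X}) (F : fieldType)
  (T : {set {ffun 'I_d -> X}}) (f : X -> F).

(* one variable y_t for every d-tuple t (only those with t in T occur) *)
Definition nvars := #|{: {ffun 'I_d -> X}}|.
(* coefficient ring: polynomials in z over F[{y_t}] *)
Definition Coef := {poly {mpoly F[nvars]}}.
Definition yvar (t : {ffun 'I_d -> X}) : Coef := ('X_(enum_rank t))%:P.
Definition cst (c : F) : Coef := (c%:MP)%:P.

Definition rk := ((d - 1) * k)%N.

Definition chi (b : X) : 'I_rk -> Coef := fun j => cst (f b ^+ j).

(* M_t = chi(t[2]) /\ ... /\ chi(t[d])  (coordinates indexed from 0) *)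
Definition Mt (t : {ffun 'I_d -> X}) : ext Coef rk :=
  \big[@ext_mul Coef rk / ext_one Coef rk]_(i : 'I_d | (0 < i)%N) ext_vec (chi (t i)).

(* first coordinate of a tuple (index 0) and the set U_1 *)
Definition first_is (t : {ffun 'I_d -> X}) (a : X) : bool :=
  [forall i : 'I_d, (nat_of_ord i == 0)%N ==> (t i == a)].
Definition U1 : {set X} := \bigcup_(i : 'I_d | nat_of_ord i == 0%N) U i.

Definition Qa (a : X) : ext Coef rk :=
  \big[@ext_add Coef rk / [ffun => 0]]_(t in T | first_is t a) ext_scale (yvar t) (Mt t).

(* P(z) = prod_{a in U_1} (1 + z Q_a); z is the polynomial variable 'X *)
Definition Pz : ext Coef rk :=
  \big[@ext_mul Coef rk / ext_one Coef rk]_(a in U1)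
     ext_add (ext_one Coef rk) (ext_scale 'X (Qa a)).

End Construction.

Definition tuples_disjoint (d : nat) (X : finType) (a b : {ffun 'I_d -> X}) :=
  forall i : 'I_d, a i != b i.

From HB Require Import structures.
From mathcomp Require Import all_boot all_order all_algebra all_fingroup.
From mathcomp Require Import mpoly.
From mathcomp Require Import ring.
Set Implicit Arguments. Unset Strict Implicit. Unset Printing Implicit Defensive.
Import GRing.Theory.
Local Open Scope ring_scope.

(* The coefficient of z^j in P(z) = prod_a (1 + z Q_a) is the sum, over the
   j-subsets A of U_1, of prod_(a in A) Q_a.  Each Q_a is homogeneous of degree
   d-1 in the exterior algebra of a space of dimension (d-1)k, so these
   products vanish for j > k.  For j = k, expanding prod_(a in A) Q_a picks one
   tuple t_a with first coordinate a for every a in A; if two of them share a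
   coordinate b, the product contains chi(b) /\ chi(b) = 0, so a nonzero top
   coefficient yields k pairwise disjoint tuples.  Conversely, for a disjoint
   family S, setting y_t := [t \in S] kills every term except the one for A =
   the first coordinates of S, whose e_[(d-1)k]-coordinate is a Vandermonde
   determinant in the (d-1)k distinct values f(t[i]), t in S, i >= 2. *)

Section CommExterior.
Variables (R : comNzRingType) (r : nat).

(* A copy of ext with the sign-free product.  It is commutative in any
   characteristic, hence a ring for free, and in characteristic 2 it coincides
   with ext_mul (ext_mulE). *)
Definition cext := ext R r.
HB.instance Definition _ := GRing.Zmodule.on cext.

Definition union_disjoint (I J K : {set 'I_r}) : bool :=
  (I :&: J == set0) && (I :|: J == K).

Definition cext_mul (u v : cext) : cext :=
  [ffun K => \sum_I \sum_J (union_disjoint I J K)%:R * (u I * v J)].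

Lemma cext_mulC : commutative cext_mul.
Proof.
move=> u v; apply/ffunP => K; rewrite !ffunE exchange_big /=.
apply: eq_bigr => I _; apply: eq_bigr => J _.
by rewrite /union_disjoint setIC setUC [u _ * _]mulrC.
Qed.

Definition ext_scalar (c : R) : cext := [ffun K => (K == set0)%:R * c].

Lemma cext_mul_scalar c u : cext_mul (ext_scalar c) u = [ffun K => c * u K].
Proof.
apply/ffunP => K; rewrite !ffunE (bigD1 set0) //= [\sum_(I | I != set0) _]big1 => [|I nI].
  rewrite addr0 (bigD1 K) //= [\sum_(J | J != K) _]big1 => [|J nJ].
    by rewrite /union_disjoint set0U set0I !eqxx ffunE eqxx !mul1r addr0.
  by rewrite /union_disjoint set0U (negbTE nJ) andbF mul0r.
by apply: big1 => J _; rewrite ffunE (negbTE nI) !mul0r mulr0.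
Qed.

Lemma cext_mul1 : left_id (ext_one R r) cext_mul.
Proof.
move=> u; have -> : ext_one R r = ext_scalar 1 by apply/ffunP => K; rewrite !ffunE mulr1.
by rewrite cext_mul_scalar; apply/ffunP => K; rewrite ffunE mul1r.
Qed.

Lemma cext_mulDl : left_distributive cext_mul +%R.
Proof.
move=> u v w; apply/ffunP => K; rewrite !ffunE -big_split; apply: eq_bigr => I _.
by rewrite -big_split; apply: eq_bigr => J _; rewrite ffunE !mulrDl mulrDr.
Qed.

Let union3_disjoint (A B C K : {set 'I_r}) : bool :=
  [&& A :&: B == set0, A :&: C == set0, B :&: C == set0 & A :|: B :|: C == K].

Let cext_mul3 (u v w : cext) K :=
  \sum_A \sum_B \sum_C (union3_disjoint A B C K)%:R * (u A * v B * w C).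

Let cext_mul_mul3 u v w K : cext_mul u (cext_mul v w) K = cext_mul3 u v w K.
Proof.
rewrite !ffunE; apply: eq_bigr => A _.
transitivity (\sum_J \sum_B \sum_C
   ((union_disjoint A J K)%:R * (union_disjoint B C J)%:R * (u A * v B * w C))).
  apply: eq_bigr => J _; rewrite ffunE !big_distrr; apply: eq_bigr => B _ /=.
  by rewrite !big_distrr; apply: eq_bigr => C _ /=; ring.
rewrite exchange_big /=; apply: eq_bigr => B _.
rewrite exchange_big /=; apply: eq_bigr => C _.
rewrite -big_distrl /= (bigD1 (B :|: C)) //= big1 ?addr0 => [|J nJ]; last first.
  by rewrite /union_disjoint [B :|: C == J]eq_sym (negbTE nJ) andbF mulr0.
rewrite /union_disjoint /union3_disjoint eqxx andbT -natrM setIUr setU_eq0 setUA.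
by case: (A :&: B == set0); case: (A :&: C == set0); case: (B :&: C == set0);
  case: (A :|: B :|: C == K).
Qed.

Let cext_mul3_rot u v w K : cext_mul3 u v w K = cext_mul3 w u v K.
Proof.
rewrite /cext_mul3; under eq_bigr do rewrite exchange_big.
rewrite exchange_big; apply: eq_bigr => C _; apply: eq_bigr => A _.
apply: eq_bigr => B _; rewrite /union3_disjoint; congr (_%:R * _); last by ring.
rewrite (setIC C A) (setIC C B) [C :|: A]setUC setUAC.
by case: (A :&: B == set0); case: (A :&: C == set0); case: (B :&: C == set0).
Qed.

Lemma cext_mulA : associative cext_mul.
Proof.
by move=> u v w; apply/ffunP => K; rewrite cext_mul_mul3 cext_mulC cext_mul_mul3 cext_mul3_rot.
Qed.

Lemma cext_one_neq0 : ext_one R r != 0 :> cext.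
Proof. by apply/eqP => /ffunP /(_ set0); rewrite !ffunE eqxx; exact/eqP/oner_neq0. Qed.

HB.instance Definition _ := GRing.Zmodule_isComNzRing.Build cext
  cext_mulA cext_mulC cext_mul1 cext_mulDl cext_one_neq0.

Lemma cext_mulE (u v : cext) K :
  (u * v) K = \sum_I \sum_J (union_disjoint I J K)%:R * (u I * v J).
Proof. by rewrite ffunE. Qed.

Lemma ext_addE (u v : ext R r) : ext_add u v = (u : cext) + v.
Proof. by apply/ffunP => K; rewrite !ffunE. Qed.

Lemma big_ext_add (I : Type) (s : seq I) (P : pred I) (F : I -> ext R r) :
  \big[@ext_add R r/[ffun => 0]]_(i <- s | P i) F i = \sum_(i <- s | P i) (F i : cext).
Proof.
apply: (big_rec2 (fun (a : ext R r) (b : cext) => a = b)) => [|i y1 y2 _ ->].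
  by apply/ffunP => K; rewrite !ffunE.
by rewrite ext_addE.
Qed.

Lemma ext_scalarME c (u : cext) K : (ext_scalar c * u) K = c * u K.
Proof. by rewrite -[LHS]/(cext_mul (ext_scalar c) u K) cext_mul_scalar ffunE. Qed.

Fact ext_scalar_is_nmod_morphism : nmod_morphism ext_scalar.
Proof. by split=> [|a b]; apply/ffunP => K; rewrite !ffunE ?mulr0 ?mulrDr. Qed.

Fact ext_scalar_is_monoid_morphism : monoid_morphism ext_scalar.
Proof.
split=> [|a b]; apply/ffunP => K; first by rewrite !ffunE mulr1.
by rewrite ext_scalarME !ffunE mulrCA.
Qed.

HB.instance Definition _ := GRing.isNmodMorphism.Build R cext ext_scalar
  ext_scalar_is_nmod_morphism.
HB.instance Definition _ := GRing.isMonoidMorphism.Build R cext ext_scalar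
  ext_scalar_is_monoid_morphism.

Lemma ext_scaleE c (u : ext R r) : ext_scale c u = ext_scalar c * (u : cext).
Proof. by apply/ffunP => K; rewrite ext_scalarME ffunE. Qed.

Definition ext_basis (I : {set 'I_r}) : cext := [ffun K => (K == I)%:R].

Lemma ext_basisM I J :
  ext_basis I * ext_basis J = if I :&: J == set0 then ext_basis (I :|: J) else 0.
Proof.
apply/ffunP => K; rewrite cext_mulE (bigD1 I) //= [\sum_(I' | I' != I) _]big1; last first.
  by move=> I' nI; apply: big1 => J' _; rewrite ffunE (negbTE nI) mul0r mulr0.
rewrite addr0 (bigD1 J) //= [\sum_(J' | J' != J) _]big1 => [|J' nJ]; last first.
  by rewrite [ext_basis J J']ffunE (negbTE nJ) !mulr0.
rewrite !ffunE !eqxx !mulr1 addr0 /union_disjoint.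
by case: ifP => _ /=; rewrite ?ffunE ?mul0r // eq_sym.
Qed.

Lemma ext_vecE (v : 'I_r -> R) :
  ext_vec v = \sum_i ext_scalar (v i) * ext_basis [set i] :> cext.
Proof.
apply/ffunP => K; rewrite ffunE sum_ffunE big_mkcond; apply: eq_bigr => i _.
by rewrite ext_scalarME ffunE; case: (K == [set i]); rewrite ?mulr1 ?mulr0.
Qed.

Lemma prod_ext_basis (I : Type) (s : seq I) (g : I -> 'I_r) :
  \prod_(j <- s) ext_basis [set g j] =
  if uniq (map g s) then ext_basis [set x in map g s] else 0.
Proof.
elim: s => [|x s IH].
  apply/ffunP => K; rewrite big_nil !ffunE.
  by congr (_ == _)%:R; apply/setP => y; rewrite !inE.
rewrite big_cons IH /=; case: ifP => _; last by rewrite andbF mulr0.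
rewrite andbT ext_basisM setI_eq0 disjoints1 inE.
by case: ifP => _ //; congr ext_basis; apply/setP => y; rewrite !inE.
Qed.

End CommExterior.

Section Pchar2.
Variable R : comNzRingType.
Hypothesis pcharR2 : 2 \in [pchar R].

Lemma ext_sign_pchar2 r I J : @ext_sign R r I J = 1.
Proof. by rewrite /ext_sign oppr_pchar2 ?expr1n. Qed.

Lemma ext_mulE r (u v : ext R r) : ext_mul u v = (u : cext R r) * v.
Proof.
apply/ffunP => K; rewrite !ffunE; apply: eq_bigr => I _.
rewrite big_mkcond /=; apply: eq_bigr => J _.
rewrite ext_sign_pchar2 mul1r /union_disjoint setI_eq0.
by case: ifP; rewrite ?mul1r ?mul0r.
Qed.

Lemma big_ext_mul r (I : Type) (s : seq I) (P : pred I) (F : I -> ext R r) :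
  \big[@ext_mul R r/ext_one R r]_(i <- s | P i) F i =
  \prod_(i <- s | P i) (F i : cext R r).
Proof. by elim/big_rec2: _ => [|i y1 y2 _ ->]; rewrite ?ext_mulE. Qed.

Lemma cext_pchar2 r : 2 \in [pchar cext R r].
Proof. exact: (rmorph_pchar (@ext_scalar R r)). Qed.

Lemma ext_vec_sqr r (v : 'I_r -> R) : (ext_vec v : cext R r) ^+ 2 = 0.
Proof.
rewrite ext_vecE -(pFrobenius_autE (cext_pchar2 r)) rmorph_sum big1 // => i _ /=.
rewrite pFrobenius_autE exprMn [ext_basis _ _ ^+ 2]expr2 ext_basisM setIid.
by case: ifP => [/eqP/setP/(_ i)|]; rewrite ?mulr0 // !inE eqxx.
Qed.

Lemma prod_ext_vec_top n r (e : n = r) (w : 'I_n -> 'I_r -> R) :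
  (\prod_(j < n) (ext_vec (w j) : cext R r)) setT =
  \det (\matrix_(j, i) w j (cast_ord e i)).
Proof.
case: r / e w => w; rewrite (eq_bigr _ (fun j _ => ext_vecE (w j))).
rewrite bigA_distr_bigA sum_ffunE.
transitivity (\sum_(g : {ffun 'I_n -> 'I_n}) (injectiveb g)%:R * \prod_j w j (g j)).
  apply: eq_bigr => g _; rewrite big_split /= -rmorph_prod ext_scalarME mulrC.
  congr (_ * _); rewrite prod_ext_basis [index_enum _]unlock -enumT.
  rewrite /injectiveb /dinjectiveb; case: ifP => inj; rewrite ffunE //.
  suff -> : [set x in [seq g i | i <- enum 'I_n]] = [set: 'I_n] by rewrite eqxx.
  apply/setP => y; rewrite !inE -codomE.
  exact: (inj_card_onto (injectiveP _ inj) (leqnn _)).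
rewrite (bigID (fun g : {ffun 'I_n -> 'I_n} => injectiveb g)) /= addrC big1 ?add0r;
  last by move=> g /negbTE ->; rewrite mul0r.
rewrite (reindex (@pval _)) /=; last first.
  by exists (insubd (1%g : 'S_n)) => /= g Ug; [apply: val_inj|]; apply: insubdK.
apply: eq_big => /= [s | s _]; rewrite ?(valP s) // mul1r oppr_pchar2 // expr1n mul1r.
by apply: eq_bigr => i _; rewrite mxE cast_ord_id pvalE.
Qed.

End Pchar2.

Lemma prod_add1_subsets (R : comNzRingType) (X : finType) (B : {set X}) (G : X -> R) :
  \prod_(a in B) (1 + G a) = \sum_(A : {set X} | A \subset B) \prod_(a in A) G a.
Proof.
pose G' a := if a \in B then G a else 0.
transitivity (\prod_a (G' a + 1)).
  rewrite big_mkcond; apply: eq_bigr => a _.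
  by rewrite /G'; case: ifP; rewrite ?add0r // addrC.
rewrite (@bigA_distr R 0 1 *%R +%R X G' (fun=> 1)).
rewrite (bigID (fun A : {set X} => A \subset B)) /= [X in _ + X]big1 ?addr0 => [|A].
  apply: eq_bigr => A AB; rewrite -big_mkcond /=; apply: eq_bigr => a aA.
  by rewrite /G' (subsetP AB a aA).
by case/subsetPn=> a aA aB; rewrite (bigD1 a) //= aA /G' (negbTE aB) mul0r.
Qed.

Section CoordMap.
Variables (R1 R2 : comNzRingType) (r : nat) (phi : {rmorphism R1 -> R2}).

Definition map_cext (u : cext R1 r) : cext R2 r := [ffun K => phi (u K)].

Fact map_cext_is_nmod_morphism : nmod_morphism map_cext.
Proof. by split=> [|u v]; apply/ffunP => K; rewrite !ffunE (rmorph0, rmorphD). Qed.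

Fact map_cext_is_monoid_morphism : monoid_morphism map_cext.
Proof.
split=> [|u v]; apply/ffunP => K; rewrite !ffunE; first by rewrite rmorph_nat.
rewrite rmorph_sum; apply: eq_bigr => I _.
by rewrite rmorph_sum; apply: eq_bigr => J _; rewrite !rmorphM rmorph_nat !ffunE.
Qed.

HB.instance Definition _ := GRing.isNmodMorphism.Build (cext R1 r) (cext R2 r) map_cext
  map_cext_is_nmod_morphism.
HB.instance Definition _ := GRing.isMonoidMorphism.Build (cext R1 r) (cext R2 r) map_cext
  map_cext_is_monoid_morphism.

Lemma map_ext_scalar c : map_cext (ext_scalar r c) = ext_scalar r (phi c).
Proof. by apply/ffunP => K; rewrite !ffunE rmorphM rmorph_nat. Qed.

Lemma map_ext_vec (v : 'I_r -> R1) : map_cext (ext_vec v) = ext_vec (phi \o v).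
Proof. by apply/ffunP => K; rewrite !ffunE rmorph_sum. Qed.

End CoordMap.

Section Homogeneous.
Variables (R : comNzRingType) (r : nat).
Local Notation E := (cext R r).

Definition ext_homog m := [qualify a u : E | [forall K, (u K != 0) ==> (#|K| == m)]].

Lemma ext_homogP m (u : E) :
  reflect (forall K, u K != 0 -> #|K| = m) (u \is a ext_homog m).
Proof.
by apply: (iffP forallP) => h K; [move=> /(implyP (h K))/eqP | apply/implyP => /h ->].
Qed.

Fact ext_homog_addr_closed m : addr_closed (ext_homog m).
Proof.
split=> [|u v /ext_homogP hu /ext_homogP hv]; apply/ext_homogP => K; rewrite ffunE ?eqxx //.
by have [->|/hu //] := eqVneq (u K) 0; rewrite add0r => /hv.
Qed.

HB.instance Definition _ m :=
  GRing.isAddClosed.Build E (ext_homog m) (ext_homog_addr_closed m).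

Lemma ext_homogM m n u v :
  u \is a ext_homog m -> v \is a ext_homog n -> u * v \is a ext_homog (m + n)%N.
Proof.
move=> /ext_homogP hu /ext_homogP hv; apply/ext_homogP => K; apply: contraNeq => ne.
rewrite cext_mulE; apply/eqP/big1 => I _; apply: big1 => J _.
rewrite /union_disjoint; have [IJ|] := eqVneq (I :&: J) set0; last by rewrite mul0r.
have [IJK|] := eqVneq (I :|: J) K; last by rewrite andbF mul0r.
have [->|/hu uI] := eqVneq (u I) 0; first by rewrite mul0r mulr0.
have [->|/hv vJ] := eqVneq (v J) 0; first by rewrite !mulr0.
by case/eqP: ne; rewrite -IJK cardsU IJ cards0 subn0 uI vJ.
Qed.

Lemma ext_homog_scalar c : ext_scalar r c \is a ext_homog 0.
Proof.
apply/ext_homogP => K; rewrite ffunE; have [->|nK] := eqVneq K set0; first by rewrite cards0.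
by rewrite mul0r eqxx.
Qed.

Lemma ext_homog_vec (v : 'I_r -> R) : ext_vec v \is a ext_homog 1.
Proof.
apply/ext_homogP => K; rewrite ffunE; apply: contraNeq => ne; apply/eqP/big1 => i /eqP Ki.
by case/eqP: ne; rewrite Ki cards1.
Qed.

Lemma ext_homog_prod (I : finType) (P : pred I) (F : I -> E) m :
  (forall i, P i -> F i \is a ext_homog m) ->
  \prod_(i | P i) F i \is a ext_homog (m * #|P|)%N.
Proof.
move=> hF; rewrite -big_filter cardE /enum_mem [index_enum _]unlock.
rewrite (@eq_filter _ (mem P) P) //.
have : all P (filter P (Finite.enum I)) by apply: filter_all.
elim: (filter _ _) => [_|i s IH /andP[Pi /IH hs]].
  by rewrite big_nil muln0 -(rmorph1 (ext_scalar r)) ext_homog_scalar.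
rewrite big_cons /= mulnS.
by apply: ext_homogM => //; exact: hF.
Qed.

End Homogeneous.

Lemma ext_homog_map (R1 R2 : comNzRingType) r (phi : {rmorphism R1 -> R2}) m
    (u : cext R1 r) :
  u \is a ext_homog R1 r m -> map_cext phi u \is a ext_homog R2 r m.
Proof.
move=> /ext_homogP hu; apply/ext_homogP => K; rewrite ffunE => /eqP nz.
by apply: hu; apply/eqP => uK; apply: nz; rewrite uK rmorph0.
Qed.

Lemma coef_prod_1_addX (S : comNzRingType) r (X : finType) (B : {set X})
    (Q : X -> cext S r) K j :
  ((\prod_(a in B) (1 + ext_scalar r 'X * map_cext polyC (Q a))) K)`_j =
  \sum_(A : {set X} | (A \subset B) && (#|A| == j)) (\prod_(a in A) Q a) K.
Proof.
rewrite prod_add1_subsets sum_ffunE coef_sum big_mkcondr /=; apply: eq_bigr => A _.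
rewrite big_split /= prodr_const -rmorphXn -rmorph_prod ext_scalarME ffunE coefXnM coefC.
case: ltnP => [ltjA|leAj]; first by rewrite ifN // neq_ltn ltjA orbT.
by rewrite subn_eq0 eqn_leq leAj.
Qed.

Lemma sumr_neq0_exists (I : finType) (V : nmodType) (P : pred I) (G : I -> V) :
  \sum_(i | P i) G i != 0 -> exists2 i, P i & G i != 0.
Proof.
move=> nz; have [i /andP[Pi Gi]|none] := pickP (fun i => P i && (G i != 0)).
  by exists i.
by case/eqP: nz; apply: big1 => i Pi; move: (none i); rewrite Pi => /negbFE/eqP.
Qed.

Lemma map_prod_ext_vec (R1 R2 : comNzRingType) r (phi : {rmorphism R1 -> R2})
    (I : finType) (P : pred I) (v : I -> 'I_r -> R1) :
  map_cext phi (\prod_(i | P i) (ext_vec (v i) : cext R1 r)) =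
  \prod_(i | P i) (ext_vec (phi \o v i) : cext R2 r).
Proof. by rewrite rmorph_prod; apply: eq_bigr => i _; exact: map_ext_vec. Qed.

Lemma card_ord_gt0 n : #|[pred i : 'I_n | (0 < i)%N]| = n.-1.
Proof.
case: n => [|n]; first by apply: eq_card0 => -[].
transitivity #|predC1 (ord0 : 'I_n.+1)|; last by rewrite cardC1 card_ord.
by apply: eq_card => i; rewrite !inE lt0n.
Qed.

Section Construction.
Variables (d k : nat) (X : finType) (U : 'I_d -> {set X})
  (F : fieldType) (T : {set {ffun 'I_d -> X}}) (f : X -> F).
Hypothesis d_ge2 : (2 <= d)%N.
Hypothesis pcharF2 : 2 \in [pchar F].

Local Notation tuple := {ffun 'I_d -> X}.
Local Notation r := (rk d k).
Local Notation Fy := {mpoly F[nvars d X]}.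

(* M_t over F and Q_a over F[{y_t}]; Mt and Qa are their images in Coef (Qa_yE). *)
Definition Mt_F (t : tuple) : cext F r :=
  \prod_(i : 'I_d | (0 < i)%N) (ext_vec (fun j : 'I_r => f (t i) ^+ j) : cext F r).

Definition Qa_y (a : X) : cext Fy r :=
  \sum_(t in T | first_is t a)
    ext_scalar r 'X_(enum_rank t) * map_cext (@mpolyC _ F) (Mt_F t).

Lemma Coef_pchar2 : 2 \in [pchar Coef d X F].
Proof. exact/(rmorph_pchar polyC)/(rmorph_pchar (@mpolyC _ F)). Qed.

Lemma Qa_yE a : Qa k T f a = map_cext polyC (Qa_y a).
Proof.
rewrite /Qa big_ext_add rmorph_sum; apply: eq_bigr => t _.
rewrite ext_scaleE /Mt_F map_prod_ext_vec rmorphM /= map_ext_scalar map_prod_ext_vec.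
by rewrite /Mt big_ext_mul ?Coef_pchar2.
Qed.

Lemma coef_Pz K j : (Pz k U T f K)`_j =
  \sum_(A : {set X} | (A \subset U1 U) && (#|A| == j)) (\prod_(a in A) Qa_y a) K.
Proof.
rewrite /Pz big_ext_mul ?Coef_pchar2 //.
under eq_bigr do rewrite ext_addE ext_scaleE Qa_yE.
exact: coef_prod_1_addX.
Qed.

Lemma Qa_y_homog a : Qa_y a \is a ext_homog _ r d.-1.
Proof.
apply: rpred_sum => t _; rewrite -[d.-1]add0n.
apply: ext_homogM; first exact: ext_homog_scalar.
apply: ext_homog_map; rewrite -[d.-1]mul1n -(card_ord_gt0 d).
by apply: ext_homog_prod => i _; exact: ext_homog_vec.
Qed.

Lemma size_Pz K : (size (Pz k U T f K) <= k.+1)%N.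
Proof.
apply/leq_sizeP => j lt_kj; rewrite coef_Pz; apply: big1 => A /andP[_ /eqP cardA].
have /ext_homogP homA := ext_homog_prod (P := mem A) (fun a _ => Qa_y_homog a).
apply/eqP/negPn/negP => /homA; rewrite cardA => cardK.
have := max_card K; rewrite card_ord cardK /rk.
have d1_gt0 : (0 < d.-1)%N by rewrite -subn1 subn_gt0.
by rewrite subn1 leq_pmul2l // leqNgt lt_kj.
Qed.

Lemma prod_Mt_F_eq0 (A : {set X}) (pick : X -> tuple) a a' (i : 'I_d) :
  a \in A -> a' \in A -> a != a' -> (0 < i)%N -> pick a i = pick a' i ->
  \prod_(b in A) Mt_F (pick b) = 0.
Proof.
move=> aA a'A naa' i_gt0 eq_i.
rewrite (bigD1 a) //= (bigD1 a') /=; last by rewrite a'A eq_sym naa'.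
rewrite /Mt_F (bigD1 i) //= [X in _ * (X * _)](bigD1 i) //= -eq_i.
have -> (v x y z : cext F r) : v * x * (v * y * z) = v ^+ 2 * (x * y * z) by ring.
by rewrite ext_vec_sqr // mul0r.
Qed.

Definition first_ord : 'I_d := Ordinal (ltnW d_ge2).

Lemma first_isE (t : tuple) a : first_is t a = (t first_ord == a).
Proof.
apply/forallP/eqP => [h | <- i]; first exact/eqP/(implyP (h first_ord)).
by apply/implyP => /eqP i0; rewrite (_ : i = first_ord) //; apply: val_inj.
Qed.

Lemma disjoint_family_of_coef_Pz : (0 < k)%N -> (Pz k U T f setT)`_k != 0 ->
  exists S : {set tuple},
    [/\ S \subset T, #|S| = k & {in S &, forall a b, a != b -> tuples_disjoint a b}].
Proof.
move=> k_gt0; rewrite coef_Pz => /sumr_neq0_exists[A /andP[_ /eqP cardA] nzA].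
have [a0 _] : {a0 | a0 \in A} by apply/sigW/set0Pn; rewrite -card_gt0 cardA.
have : \prod_(a in A) Qa_y a != 0 by apply: contraNneq nzA => ->; rewrite ffunE.
rewrite /Qa_y (big_distr_big_dep [ffun=> a0]) /=.
case/sumr_neq0_exists => pick /pfamilyP[_ pickA] nz_pick.
have pickT a : a \in A -> pick a \in T by move=> /pickA/andP[].
have pick_first a : a \in A -> pick a first_ord = a.
  by move=> /pickA/andP[_]; rewrite first_isE => /eqP.
exists (pick @: A); split.
- by apply/subsetP => _ /imsetP[a /pickT aA ->].
- rewrite card_in_imset // => a a' aA a'A eq_pick.
  by rewrite -(pick_first a aA) -(pick_first a' a'A) eq_pick.
move=> _ _ /imsetP[a aA ->] /imsetP[a' a'A ->] n_pick i; apply/negP => /eqP eq_i.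
have naa' : a != a' by apply: contraNneq n_pick => ->.
have i_gt0 : (0 < i)%N.
  rewrite lt0n; apply: contraNneq naa' => i0.
  have e0 : i = first_ord by apply: val_inj.
  by rewrite -(pick_first a aA) -(pick_first a' a'A) -e0 eq_i.
move/eqP: nz_pick; apply; rewrite big_split /= -[X in _ * X]rmorph_prod.
by rewrite (prod_Mt_F_eq0 aA a'A naa' i_gt0 eq_i) rmorph0 mulr0.
Qed.

Section DisjointFamily.
Hypothesis U_disjoint : forall i j : 'I_d, i != j -> [disjoint U i & U j].
Hypothesis T_in_U : forall t, t \in T -> forall i, t i \in U i.
Hypothesis f_inj : {in \bigcup_(i : 'I_d | (0 < i)%N) U i &, injective f}.
Variable S : {set tuple}.
Hypotheses (S_sub : S \subset T) (card_S : #|S| = k).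
Hypothesis S_disjoint : {in S &, forall a b, a != b -> tuples_disjoint a b}.

Lemma first_ord_inj : {in S &, injective (fun t : tuple => t first_ord)}.
Proof.
move=> t t' tS t'S /= eq0; apply/eqP; apply: contraT => /(S_disjoint tS t'S).
by move/(_ first_ord); rewrite eq0 eqxx.
Qed.

Definition indicator_S (i : 'I_(nvars d X)) : F := (enum_val i \in S)%:R.

Lemma map_Qa_y a :
  map_cext (meval indicator_S) (Qa_y a) = \sum_(t in S | t first_ord == a) Mt_F t.
Proof.
rewrite rmorph_sum big_mkcond [RHS]big_mkcond; apply: eq_bigr => t _ /=.
rewrite rmorphM /= map_ext_scalar /= mevalXU /indicator_S enum_rankK first_isE.
have -> : map_cext (meval indicator_S) (map_cext (@mpolyC _ F) (Mt_F t)) = Mt_F t.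
  by apply/ffunP => K; rewrite !ffunE /= mevalC.
case tS: (t \in S); last by case: ifP; rewrite // rmorph0 mul0r.
by rewrite (subsetP S_sub t tS) /=; case: ifP; rewrite // rmorph1 mul1r.
Qed.

Lemma sum_prod_fibres_top :
  \sum_(A : {set X} | (A \subset U1 U) && (#|A| == k))
     (\prod_(a in A) \sum_(t in S | t first_ord == a) Mt_F t) setT =
  (\prod_(t in S) Mt_F t) setT.
Proof.
pose AS := [set (t : tuple) first_ord | t in S].
have card_AS : #|AS| = k by rewrite card_in_imset //; exact: first_ord_inj.
have AS_U1 : AS \subset U1 U.
  apply/subsetP => _ /imsetP[t tS ->]; apply/bigcupP; exists first_ord => //.
  exact/T_in_U/(subsetP S_sub).
rewrite (bigD1 AS) /=; last by rewrite AS_U1 card_AS eqxx.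
rewrite [X in _ + X]big1 ?addr0 => [|A /andP[/andP[_ /eqP cardA] nA]]; last first.
  have [a aA aS] : exists2 a, a \in A & a \notin AS.
    by apply/subsetPn; apply: contra nA => sub; rewrite eqEcard sub cardA card_AS leqnn.
  rewrite (bigD1 a) //= big1 ?mul0r ?ffunE // => t /andP[tS /eqP ta].
  by case/imsetP: aS; exists t.
rewrite big_imset /=; last exact: first_ord_inj.
congr (_ _ setT); apply: eq_bigr => t tS; rewrite (big_pred1 t) // => t'.
apply/andP/eqP => [[t'S /eqP /first_ord_inj] | ->]; first exact.
by rewrite tS.
Qed.

Definition S_entries : {set tuple * 'I_d} :=
  [set p : tuple * 'I_d | (p.1 \in S) && (0 < p.2)%N].

Lemma card_S_entries : #|S_entries| = r.
Proof.
have -> : S_entries = setX S [set i : 'I_d | (0 < i)%N] by apply/setP => p; rewrite !inE.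
by rewrite cardsX card_S cardsE (card_ord_gt0 d) /rk subn1 mulnC.
Qed.

Lemma S_entries_inj :
  {in S_entries &, injective (fun p : tuple * 'I_d => f (p.1 p.2))}.
Proof.
have entry_U p : p \in S_entries -> p.1 p.2 \in U p.2.
  by rewrite inE => /andP[/(subsetP S_sub) /T_in_U].
move=> [t x] [t' y] /[dup] /entry_U tU; rewrite inE => /andP[tS x_gt0].
move=> /[dup] /entry_U t'U; rewrite inE => /andP[t'S y_gt0] /= /f_inj eq_txy.
have {}eq_txy : t x = t' y.
  by apply: eq_txy; apply/bigcupP; [exists x | exists y].
have [exy|nxy] := eqVneq x y; last first.
  by have := disjointFr (U_disjoint nxy) tU; rewrite eq_txy t'U.
subst y; congr (_, _); apply/eqP; apply: contraT => /(S_disjoint tS t'S).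
by move/(_ x); rewrite eq_txy eqxx.
Qed.

Lemma prod_Mt_F_top_neq0 : (\prod_(t in S) Mt_F t) setT != 0.
Proof.
rewrite /Mt_F pair_big_dep /= (eq_bigl (fun p => p \in S_entries)); last first.
  by move=> p; rewrite inE.
pose b (j : 'I_#|S_entries|) := f ((enum_val j).1 (enum_val j).2).
rewrite big_enum_val (prod_ext_vec_top pcharF2 card_S_entries (fun j i => b j ^+ i)).
have -> : \matrix_(j, i) b j ^+ cast_ord card_S_entries i =
    (Vandermonde #|S_entries| (\row_j b j))^T by apply/matrixP => j i; rewrite !mxE.
rewrite det_tr det_Vandermonde prodf_seq_neq0; apply/allP => i _; apply/implyP => _.
rewrite prodf_seq_neq0; apply/allP => j _; apply/implyP => lt_ij.
rewrite !mxE subr_eq0; apply: contraTneq lt_ij.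
by move=> /(S_entries_inj (enum_valP j) (enum_valP i)) /enum_val_inj ->; rewrite ltnn.
Qed.

Lemma coef_Pz_neq0 : (Pz k U T f setT)`_k != 0.
Proof.
rewrite coef_Pz; apply: contraNneq prod_Mt_F_top_neq0.
move=> /(congr1 (meval indicator_S)); rewrite rmorph0 rmorph_sum /= => <-.
rewrite -sum_prod_fibres_top; apply/eqP/eq_bigr => A _.
by rewrite -(eq_bigr _ (fun a _ => map_Qa_y a)) -rmorph_prod ffunE.
Qed.

End DisjointFamily.

End Construction.

Theorem mainTheorem18 (d k : nat) (X : finType) (U : 'I_d -> {set X})
  (F : fieldType) (T : {set {ffun 'I_d -> X}}) (f : X -> F) :
  (2 <= d)%N -> (1 <= k)%N ->
  (forall i j : 'I_d, i != j -> [disjoint U i & U j]) ->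
  (forall t, t \in T -> forall i, t i \in U i) ->
  (2%N \in [pchar F]) ->
  {in \bigcup_(i : 'I_d | (0 < i)%N) U i &, injective f} ->
  (forall K, (size (Pz k U T f K) <= k.+1)%N) /\
  ((Pz k U T f setT)`_k != 0 <->
    exists S : {set {ffun 'I_d -> X}},
      [/\ S \subset T, #|S| = k &
          {in S &, forall a b, a != b -> tuples_disjoint a b}]).
Proof.
move=> d_ge2 k_gt0 U_disjoint T_in_U pcharF2 f_inj.
split; first exact: size_Pz.
split; first exact: disjoint_family_of_coef_Pz.
case=> S [S_sub card_S S_disjoint].
exact: (coef_Pz_neq0 d_ge2 pcharF2 U_disjoint T_in_U f_inj S_sub card_S S_disjoint).
Qed.
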